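(* Let $(L,\vee,\wedge,\odot,\rightarrow,0,1)$ be a residuated lattice. The following are equivalent: (i) $L$ is a BL-algebra; (ii) for all $x,y,z\in L$, if $x\odot(x\rightarrow y)\leq z$, then $(x\rightarrow z)\vee(y\rightarrow z)=1$; (iii) $[x\odot(x\rightarrow y)]\rightarrow z=(x\rightarrow z)\vee(y\rightarrow z)$ for all $x,y,z\in L$.
   Context: A (commutative) residuated lattice is an algebra $(L,\wedge,\vee,\odot,\rightarrow,0,1)$ such that $(L,\wedge,\vee,0,1)$ is a bounded lattice, $(L,\odot,1)$ is a commutative ordered monoid, and $z\leq x\rightarrow y$ iff $x\odot z\leq y$ for all $x,y,z\in L$. A BL-algebra is a residuated lattice satisfying prelinearity $(x\rightarrow y)\vee(y\rightarrow x)=1$ and divisibility $x\odot(x\rightarrow y)=x\wedge y$ for all $x,y$. *)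

From mathcomp Require Import all_boot all_order.
Set Implicit Arguments. Unset Strict Implicit. Unset Printing Implicit Defensive.
Import Order.TTheory.
Local Open Scope order_scope.

Definition is_residuated_lattice (d : Order.disp_t) (L : tbLatticeType d)
  (mul imp : L -> L -> L) : Prop :=
  [/\ associative mul, commutative mul, left_id (\top : L) mul,
      (forall x y z : L, x <= y -> mul x z <= mul y z)
    & (forall x y z : L, z <= imp x y <-> mul x z <= y)].

Definition is_BL_algebra (d : Order.disp_t) (L : tbLatticeType d)
  (mul imp : L -> L -> L) : Prop :=
  [/\ is_residuated_lattice mul imp,
      (forall x y : L, imp x y `|` imp y x = \top)
    & (forall x y : L, mul x (imp x y) = x `&` y)].

From mathcomp Require Import all_boot all_order.
Import Order.TTheory.
Set Implicit Arguments.
Unset Strict Implicit.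
Local Open Scope order_scope.

(* In every residuated lattice x ⊙ (x → y) ≤ x ∧ y and (x → z) ∨ (y → z) ≤ (x ∧ y) → z;
   prelinearity is exactly what makes the second inequality an equality, because
   t = t ⊙ ((x → y) ∨ (y → x)) splits t = (x ∧ y) → z along the two cases.
   Condition (ii) at z = x ∧ y gives prelinearity, and at z = x ⊙ (x → y) gives
   x ∧ y ≤ x ⊙ (x → y), i.e. divisibility.  Under both, (iii) is the equation
   (x ∧ y) → z = (x → z) ∨ (y → z), and (ii) is its instance with x ∧ y ≤ z. *)

Section ResiduatedLattice.

Variables (d : Order.disp_t) (L : tbLatticeType d) (mul imp : L -> L -> L).
Hypothesis resL : is_residuated_lattice mul imp.

Definition prelinear := forall x y : L, imp x y `|` imp y x = \top.

Definition divisible := forall x y : L, mul x (imp x y) = x `&` y.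

Definition imp_join_top :=
  forall x y z : L, mul x (imp x y) <= z -> imp x z `|` imp y z = \top.

Definition imp_mul_imp_split :=
  forall x y z : L, imp (mul x (imp x y)) z = imp x z `|` imp y z.

Lemma residuation (x y z : L) : z <= imp x y <-> mul x z <= y.
Proof. by case: resL. Qed.

Lemma mulC : commutative mul.
Proof. by case: resL. Qed.

Lemma mulA : associative mul.
Proof. by case: resL. Qed.

Lemma mulx1 : right_id \top mul.
Proof. by case: resL => _ mC m1 _ _ x; rewrite mC m1. Qed.

Lemma le_mull (x y z : L) : x <= y -> mul x z <= mul y z.
Proof. by case: resL => _ _ _ mono _; apply: mono. Qed.

Lemma le_mulr (x y z : L) : x <= y -> mul z x <= mul z y.
Proof. by rewrite !(mulC z); apply: le_mull. Qed.

Lemma mul_imp_le (x y : L) : mul x (imp x y) <= y.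
Proof. exact/residuation. Qed.

Lemma mul_le_l (x y : L) : mul x y <= x.
Proof. by rewrite -[leRHS]mulx1 le_mulr ?lex1. Qed.

Lemma mul_imp_le_meet (x y : L) : mul x (imp x y) <= x `&` y.
Proof. by rewrite lexI mul_le_l mul_imp_le. Qed.

Lemma imp_eq_top (x y : L) : imp x y = \top <-> x <= y.
Proof.
split=> [xy|le_xy]; first by rewrite -[x]mulx1; apply/residuation; rewrite xy.
by apply/eqP; rewrite eq_le lex1 /=; apply/residuation; rewrite mulx1.
Qed.

Lemma le_impl (x y z : L) : x <= y -> imp y z <= imp x z.
Proof.
by move=> le_xy; apply/residuation; apply: le_trans (mul_imp_le y z); apply: le_mull.
Qed.

Lemma le_impr (x y z : L) : y <= z -> imp x y <= imp x z.
Proof. by move=> le_yz; apply/residuation; apply: le_trans (mul_imp_le x y) _. Qed.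

Lemma mulUr_le (x y z : L) : mul x (y `|` z) <= mul x y `|` mul x z.
Proof.
apply/residuation; rewrite leUx.
by apply/andP; split; apply/residuation; [apply: leUl | apply: leUr].
Qed.

Lemma join_imp_le_imp_meet (x y z : L) :
  imp x z `|` imp y z <= imp (x `&` y) z.
Proof. by rewrite leUx !le_impl ?leIl ?leIr. Qed.

Lemma imp_meet_prelinear : prelinear ->
  forall x y z : L, imp (x `&` y) z = imp x z `|` imp y z.
Proof.
move=> prel x y z; apply/eqP; rewrite eq_le join_imp_le_imp_meet andbT.
set t := imp (x `&` y) z.
have split_t (u v : L) : u `&` v = x `&` y -> mul t (imp u v) <= imp u z.
  move=> uv; apply/residuation; rewrite mulA (mulC u) -mulA.
  apply: (@le_trans _ _ (mul t (x `&` y))).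
    by rewrite le_mulr // -uv mul_imp_le_meet.
  by rewrite mulC mul_imp_le.
rewrite -[t]mulx1 -(prel x y); apply: le_trans (mulUr_le _ _ _) _.
by apply: leU2; apply: split_t; rewrite // meetC.
Qed.

Lemma BL_algebraP : is_BL_algebra mul imp <-> prelinear /\ divisible.
Proof. by split=> [[]|[]]. Qed.

Lemma imp_join_top_prelinear : imp_join_top -> prelinear.
Proof.
move=> H x y; apply/eqP; rewrite eq_le lex1 -(H x y (x `&` y)) ?mul_imp_le_meet //.
by apply: leU2; apply: le_impr; rewrite ?leIr ?leIl.
Qed.

Lemma imp_join_top_divisible : imp_join_top -> divisible.
Proof.
move=> H x y; apply/eqP; rewrite eq_le mul_imp_le_meet.
by apply/imp_eq_top/eqP; rewrite eq_le lex1 -(H x y _ (lexx _)) join_imp_le_imp_meet.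
Qed.

Lemma BL_imp_join_top : prelinear -> divisible -> imp_join_top.
Proof.
by move=> prel div x y z; rewrite div -imp_meet_prelinear // => /imp_eq_top.
Qed.

Lemma imp_join_top_mul_imp_split : imp_join_top -> imp_mul_imp_split.
Proof.
move=> H x y z; rewrite imp_join_top_divisible //.
exact/imp_meet_prelinear/imp_join_top_prelinear.
Qed.

Lemma imp_mul_imp_split_join_top : imp_mul_imp_split -> imp_join_top.
Proof. by move=> H x y z /imp_eq_top; rewrite H. Qed.

End ResiduatedLattice.

Theorem proposition3p4 (d : Order.disp_t) (L : tbLatticeType d)
  (mul imp : L -> L -> L) :
  is_residuated_lattice mul imp ->
  (is_BL_algebra mul imp <->
     (forall x y z : L, mul x (imp x y) <= z -> imp x z `|` imp y z = \top))
  /\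
  ((forall x y z : L, mul x (imp x y) <= z -> imp x z `|` imp y z = \top) <->
     (forall x y z : L, imp (mul x (imp x y)) z = imp x z `|` imp y z)).
Proof.
move=> resL; split.
  split=> [/(BL_algebraP resL) [prel div] | H]; first exact: BL_imp_join_top.
  apply/(BL_algebraP resL).
  exact: (conj (imp_join_top_prelinear resL H) (imp_join_top_divisible resL H)).
split; [exact: imp_join_top_mul_imp_split | exact: imp_mul_imp_split_join_top].
Qed.
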